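(* Let $A$ be an Archimedean semiprime $f$-algebra and let $A_b=\{a\in A: a^2\le\mu|a|\text{ for some }\mu\in(0,\infty)\}$. For $a\in A$, we have $a\in A_b$ if and only if $a^2\in A_b$.
   Context: An $f$-algebra is a real associative algebra that is a vector lattice with $A_+A_+\subseteq A_+$ and such that $a\wedge b=0$ implies $ac\wedge b=ca\wedge b=0$ for all $c\in A_+$; it is semiprime if $0$ is its only nilpotent element. *)

From HB Require Import structures.
From mathcomp Require Import all_boot all_order all_algebra.
From mathcomp Require Import reals.
Set Implicit Arguments. Unset Strict Implicit. Unset Printing Implicit Defensive.
Import Order.TTheory GRing.Theory Num.Theory.
Local Open Scope ring_scope.

Section FAlg.
Variables (R : realType) (V : lmodType R) (mul : V -> V -> V)
  (le : rel V) (meet join : V -> V -> V).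

Record f_algebra : Prop := {
  mulA : forall x y z, mul x (mul y z) = mul (mul x y) z;
  mulDl : forall x y z, mul (x + y) z = mul x z + mul y z;
  mulDr : forall x y z, mul x (y + z) = mul x y + mul x z;
  mulZl : forall (c : R) x y, mul (c *: x) y = c *: mul x y;
  mulZr : forall (c : R) x y, mul x (c *: y) = c *: mul x y;
  le_refl : forall x, le x x;
  le_anti : forall x y, le x y -> le y x -> x = y;
  le_trans : forall x y z, le x y -> le y z -> le x z;
  le_add : forall x y z, le x y -> le (x + z) (y + z);
  le_scale : forall (c : R) x y, 0 <= c -> le x y -> le (c *: x) (c *: y);
  join_ub : forall x y, le x (join x y) /\ le y (join x y);
  join_least : forall x y z, le x z -> le y z -> le (join x y) z;
  meet_lb : forall x y, le (meet x y) x /\ le (meet x y) y;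
  meet_greatest : forall x y z, le z x -> le z y -> le z (meet x y);
  mul_pos : forall a b, le 0 a -> le 0 b -> le 0 (mul a b);
  f_prop : forall a b c, meet a b = 0 -> le 0 c ->
             meet (mul a c) b = 0 /\ meet (mul c a) b = 0
}.

Definition archimedean : Prop :=
  forall x y, le 0 x -> (forall n : nat, le (x *+ n) y) -> x = 0.

(* mpow a n = a^(n+1) *)
Definition mpow (a : V) (n : nat) : V := iter n (mul a) a.

Definition semiprime : Prop := forall a n, mpow a n = 0 -> a = 0.

Definition absv (a : V) : V := join a (- a).

Definition in_Ab (a : V) : Prop :=
  exists mu : R, 0 < mu /\ le (mul a a) (mu *: absv a).

End FAlg.

From Pilot Require Import Defs.
From HB Require Import structures.
From mathcomp Require Import all_boot all_order all_algebra.
From mathcomp Require Import reals.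
From mathcomp Require Import lra.
Import Order.TTheory GRing.Theory Num.Theory.
Local Open Scope ring_scope.

(* Since a^2 = |a|^2 in an f-algebra, it suffices to treat b = |a| >= 0.
   If b^2 <= mu b then b^4 <= mu b^3 <= mu^2 b^2.  Conversely, let
   b^4 <= mu b^2, pick nu > 0 with nu^2 > mu and let p be the positive part
   of x = b^2 - nu b.  Disjointness of positive and negative parts gives
   p x = p^2 >= 0, i.e. nu p b <= p b^2; multiplying twice by b gives
   nu^2 p b^2 <= p b^4 <= mu p b^2, so p b^2 = 0.  Then p^2 = - nu p b <= 0,
   so p^2 = 0, hence p = 0 by semiprimeness, i.e. b^2 <= nu b. *)

Section FAlgebraTheory.
Context {R : realType} {V : lmodType R} {mul : V -> V -> V}
  {le : rel V} {meet join : V -> V -> V}.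
Hypothesis HA : f_algebra mul le meet join.

Local Notation "x ≤ y" := (le x y) (at level 70, no associativity).
Local Notation "x ⋅ y" := (mul x y) (at level 40, left associativity).
Local Notation absv := (absv join).

Lemma lev_refl x : x ≤ x. Proof. exact: Defs.le_refl HA x. Qed.

Lemma lev_anti x y : x ≤ y -> y ≤ x -> x = y. Proof. exact: (Defs.le_anti HA). Qed.

Lemma lev_trans y {x z} : x ≤ y -> y ≤ z -> x ≤ z. Proof. exact: (Defs.le_trans HA). Qed.

Lemma lev_add2r z {x y} : x ≤ y -> x + z ≤ y + z. Proof. exact: (Defs.le_add HA). Qed.

Lemma lev_add {x y u v} : x ≤ y -> u ≤ v -> x + u ≤ y + v.
Proof.
move=> lexy leuv; apply: (lev_trans _ (lev_add2r u lexy)).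
by rewrite ![y + _]addrC; apply: lev_add2r.
Qed.

Lemma subv_ge0 x y : (0 ≤ y - x) = (x ≤ y).
Proof.
apply/idP/idP => [|lexy]; first by move/(lev_add2r x); rewrite add0r subrK.
by have := lev_add2r (- x) lexy; rewrite subrr.
Qed.

Lemma lev_opp2 {x y} : x ≤ y -> - y ≤ - x.
Proof. by rewrite -subv_ge0 => ge0; rewrite -subv_ge0 opprK addrC. Qed.

Lemma oppv_le0 x : 0 ≤ x -> - x ≤ 0.
Proof. by move/lev_opp2; rewrite oppr0. Qed.

Lemma lev_pscale2l {c : R} {x y} : 0 <= c -> x ≤ y -> c *: x ≤ c *: y.
Proof. exact: (Defs.le_scale HA). Qed.

Lemma scalev_ge0 (c : R) x : 0 <= c -> 0 ≤ x -> 0 ≤ c *: x.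
Proof. by move=> c_ge0 /(lev_pscale2l c_ge0); rewrite scaler0. Qed.

Lemma scalev_le0 (c : R) x : 0 < c -> c *: x ≤ 0 -> x ≤ 0.
Proof.
move=> c_gt0; have cV_ge0 : 0 <= c^-1 by rewrite invr_ge0 ltW.
move/(lev_pscale2l cV_ge0).
by rewrite scaler0 scalerA mulVf ?gt_eqF // scale1r.
Qed.

Lemma lev_scale_eq0 {c d : R} {y} : d < c -> 0 ≤ y -> c *: y ≤ d *: y -> y = 0.
Proof.
move=> ltdc y_ge0 le_cd; apply: lev_anti y_ge0.
apply: (@scalev_le0 (c - d)); first by rewrite subr_gt0.
by rewrite scalerBl -(subrr (d *: y)) lev_add2r.
Qed.

Lemma mulvDl x y z : (x + y) ⋅ z = x ⋅ z + y ⋅ z. Proof. exact: (Defs.mulDl HA). Qed.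

Lemma mulvDr x y z : x ⋅ (y + z) = x ⋅ y + x ⋅ z. Proof. exact: (Defs.mulDr HA). Qed.

Lemma mulvA x y z : x ⋅ (y ⋅ z) = x ⋅ y ⋅ z. Proof. exact: (Defs.mulA HA). Qed.

Lemma mulvZl (c : R) x y : (c *: x) ⋅ y = c *: (x ⋅ y). Proof. exact: (Defs.mulZl HA). Qed.

Lemma mulvZr (c : R) x y : x ⋅ (c *: y) = c *: (x ⋅ y). Proof. exact: (Defs.mulZr HA). Qed.

Lemma mulvN x y : x ⋅ (- y) = - (x ⋅ y).
Proof. by rewrite -scaleN1r mulvZr scaleN1r. Qed.

Lemma mulNv x y : (- x) ⋅ y = - (x ⋅ y).
Proof. by rewrite -scaleN1r mulvZl scaleN1r. Qed.

Lemma mulvBr x y z : x ⋅ (y - z) = x ⋅ y - x ⋅ z.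
Proof. by rewrite mulvDr mulvN. Qed.

Lemma mulvBl x y z : (x - y) ⋅ z = x ⋅ z - y ⋅ z.
Proof. by rewrite mulvDl mulNv. Qed.

Lemma mulv_ge0 {x y} : 0 ≤ x -> 0 ≤ y -> 0 ≤ x ⋅ y. Proof. exact: (Defs.mul_pos HA). Qed.

Lemma lev_mul2l {c x y} : 0 ≤ c -> x ≤ y -> c ⋅ x ≤ c ⋅ y.
Proof. by move=> c_ge0 lexy; rewrite -subv_ge0 -mulvBr mulv_ge0 ?subv_ge0. Qed.

Lemma lev_mul2r {c x y} : 0 ≤ c -> x ≤ y -> x ⋅ c ≤ y ⋅ c.
Proof. by move=> c_ge0 lexy; rewrite -subv_ge0 -mulvBl mulv_ge0 ?subv_ge0. Qed.

Lemma levIl x y : meet x y ≤ x. Proof. by case: (Defs.meet_lb HA x y). Qed.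

Lemma levIr x y : meet x y ≤ y. Proof. by case: (Defs.meet_lb HA x y). Qed.

Lemma levxI {x y z} : z ≤ x -> z ≤ y -> z ≤ meet x y.
Proof. exact: (Defs.meet_greatest HA). Qed.

Lemma levUl x y : x ≤ join x y. Proof. by case: (Defs.join_ub HA x y). Qed.

Lemma levUr x y : y ≤ join x y. Proof. by case: (Defs.join_ub HA x y). Qed.

Lemma levUx {x y z} : x ≤ z -> y ≤ z -> join x y ≤ z.
Proof. exact: (Defs.join_least HA). Qed.

Lemma meetvC x y : meet x y = meet y x.
Proof. by apply: lev_anti; apply: levxI; rewrite ?levIl ?levIr. Qed.

Lemma meetvv x : meet x x = x.
Proof. by apply: lev_anti; rewrite ?levIl ?levxI ?lev_refl. Qed.

Lemma joinvC x y : join x y = join y x.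
Proof. by apply: lev_anti; apply: levUx; rewrite ?levUl ?levUr. Qed.

Lemma joinvDl z x y : join x y + z = join (x + z) (y + z).
Proof.
apply: lev_anti; last by apply: levUx; apply: lev_add2r; rewrite ?levUl ?levUr.
set J := join (x + z) _; rewrite -[J](subrK z); apply: lev_add2r.
have le_subz u : u + z ≤ J -> u ≤ J - z by move/(lev_add2r (- z)); rewrite addrK.
by apply: levUx; apply: le_subz; rewrite ?levUl ?levUr.
Qed.

Lemma mulv_disj x y : meet x y = 0 -> x ⋅ y = 0.
Proof.
move=> xy0; have x_ge0 : 0 ≤ x by rewrite -xy0 levIl.
have y_ge0 : 0 ≤ y by rewrite -xy0 levIr.
have := (Defs.f_prop HA xy0 y_ge0).1; rewrite meetvC => yxy0.
by have := (Defs.f_prop HA yxy0 x_ge0).2; rewrite meetvv.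
Qed.

Definition posv x := join x 0.
Definition negv x := join (- x) 0.

Lemma posv_ge0 x : 0 ≤ posv x. Proof. exact: levUr. Qed.

Lemma negv_ge0 x : 0 ≤ negv x. Proof. exact: levUr. Qed.

Lemma negvE x : negv x = posv x - x.
Proof. by rewrite /posv joinvDl subrr add0r joinvC. Qed.

Lemma posvBnegv x : posv x - negv x = x.
Proof. by rewrite negvE opprB addrC subrK. Qed.

Lemma meet_posv_negv x : meet (posv x) (negv x) = 0.
Proof.
have le_p := levIl (posv x) (negv x); have le_n := levIr (posv x) (negv x).
set m := meet _ _ in le_p le_n *.
apply: lev_anti; last by rewrite levxI ?posv_ge0 ?negv_ge0.
suff : posv x ≤ posv x - m.
  by rewrite -subv_ge0 addrAC subrr add0r => /lev_opp2; rewrite opprK oppr0.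
apply: levUx; last by rewrite subv_ge0.
by rewrite -{1}(posvBnegv x) lev_add ?lev_refl ?lev_opp2.
Qed.

Lemma mul_posv_negv x : posv x ⋅ negv x = 0.
Proof. exact/mulv_disj/meet_posv_negv. Qed.

Lemma mul_negv_posv x : negv x ⋅ posv x = 0.
Proof. by apply: mulv_disj; rewrite meetvC meet_posv_negv. Qed.

Lemma mul_posv_self x : posv x ⋅ x = posv x ⋅ posv x.
Proof. by rewrite -[X in _ ⋅ X = _](posvBnegv x) mulvBr mul_posv_negv subr0. Qed.

Lemma absvE x : absv x = posv x + negv x.
Proof.
apply: lev_anti.
  apply: levUx.
    by rewrite -{1}(posvBnegv x) lev_add ?lev_refl // (lev_trans 0) ?oppv_le0 ?negv_ge0.
  rewrite -{1}(posvBnegv x) opprB addrC.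
  by rewrite lev_add ?lev_refl // (lev_trans 0) ?oppv_le0 ?posv_ge0.
have half_double (y : V) : 2^-1 *: (y + y) = y.
  by rewrite -{1 2}(scale1r y) -scalerDl scalerA mulVf ?pnatr_eq0 // scale1r.
have half_ge0 : 0 <= 2^-1 :> R by rewrite invr_ge0 ler0n.
(* [posv x <= (|x| + x) / 2], hence [posv x + negv x = 2 posv x - x <= |x|]. *)
have le_pos : posv x ≤ 2^-1 *: (absv x + x).
  apply: levUx.
    by rewrite -{1}(half_double x) lev_pscale2l // addrC lev_add2r ?levUl.
  by rewrite -(scaler0 _ 2^-1) lev_pscale2l // -(subrr x) addrC lev_add2r ?levUr.
have := lev_add le_pos le_pos; rewrite -scalerDr half_double => le_2pos.
by rewrite negvE addrA -(addrK x (absv x)) lev_add2r.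
Qed.

Lemma absv_ge0 x : 0 ≤ absv x.
Proof. by rewrite absvE -(addr0 0) lev_add ?posv_ge0 ?negv_ge0. Qed.

Lemma absv_id x : 0 ≤ x -> absv x = x.
Proof.
move=> x_ge0; apply: lev_anti; last exact: levUl.
by rewrite levUx ?lev_refl // (lev_trans 0) ?oppv_le0.
Qed.

Lemma mul_absv x : absv x ⋅ absv x = x ⋅ x.
Proof.
rewrite absvE -[in RHS](posvBnegv x) !mulvBl !mulvBr !mulvDl !mulvDr.
by rewrite mul_posv_negv mul_negv_posv !subr0 !addr0 !add0r opprK.
Qed.

Lemma sqrv_bounded_sqr {b : V} {mu : R} : 0 ≤ b -> 0 <= mu ->
  b ⋅ b ≤ mu *: b -> (b ⋅ b) ⋅ (b ⋅ b) ≤ (mu * mu) *: (b ⋅ b).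
Proof.
move=> b_ge0 mu_ge0 le_bb; have bb_ge0 := mulv_ge0 b_ge0 b_ge0.
have le_b3 : (b ⋅ b) ⋅ b ≤ mu *: (b ⋅ b) by rewrite -mulvZl lev_mul2r.
apply: (lev_trans (mu *: ((b ⋅ b) ⋅ b))); first by rewrite -mulvZr lev_mul2l.
by rewrite -scalerA lev_pscale2l.
Qed.

Section Semiprime.
Hypothesis Hsp : semiprime mul.

Lemma sqrv_eq0 x : x ⋅ x = 0 -> x = 0.
Proof. exact: Hsp x 1. Qed.

Lemma bounded_of_sqrv_bounded {b : V} {mu nu : R} : 0 ≤ b -> 0 < nu ->
  mu < nu * nu -> (b ⋅ b) ⋅ (b ⋅ b) ≤ mu *: (b ⋅ b) -> b ⋅ b ≤ nu *: b.
Proof.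
move=> b_ge0 nu_gt0 mu_lt le_b4; set x := b ⋅ b - nu *: b; set p := posv x.
have p_ge0 : 0 ≤ p := posv_ge0 x.
have pb_ge0 : 0 ≤ p ⋅ b := mulv_ge0 p_ge0 b_ge0.
have px : p ⋅ x = p ⋅ (b ⋅ b) - nu *: (p ⋅ b) by rewrite mulvBr mulvZr.
have le_pb : nu *: (p ⋅ b) ≤ p ⋅ (b ⋅ b).
  by rewrite -subv_ge0 -px mul_posv_self mulv_ge0.
set y := p ⋅ (b ⋅ b) in px le_pb.
have y_ge0 : 0 ≤ y by rewrite mulv_ge0 ?mulv_ge0.
have y0 : y = 0.
  apply: (lev_scale_eq0 mu_lt y_ge0); rewrite -scalerA.
  have le_yb : nu *: y ≤ y ⋅ b.
    by move: (lev_mul2r b_ge0 le_pb); rewrite mulvZl -mulvA.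
  have le_yb2 : nu *: (y ⋅ b) ≤ y ⋅ (b ⋅ b).
    by move: (lev_mul2r b_ge0 le_yb); rewrite mulvZl -mulvA.
  apply: (lev_trans (nu *: (y ⋅ b))); first by rewrite lev_pscale2l ?ltW.
  by apply: (lev_trans _ le_yb2); rewrite /y -mulvA -mulvZr lev_mul2l.
have p0 : p = 0.
  apply: sqrv_eq0; apply: lev_anti; last exact: mulv_ge0.
  by rewrite -mul_posv_self px y0 sub0r oppv_le0 // scalev_ge0 ?ltW.
by rewrite -subv_ge0 -opprB -/x -(posvBnegv x) -/p p0 sub0r opprK negv_ge0.
Qed.

End Semiprime.
End FAlgebraTheory.

Theorem lemma7 (R : realType) (V : lmodType R) (mul : V -> V -> V)
  (le : rel V) (meet join : V -> V -> V)
  (HA : f_algebra mul le meet join) (Harch : archimedean le)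
  (Hsp : semiprime mul) (a : V) :
  in_Ab mul le join a <-> in_Ab mul le join (mul a a).
Proof.
have b_ge0 := absv_ge0 HA a; set b := absv join a in b_ge0.
have aa_b : mul a a = mul b b by rewrite (mul_absv HA).
rewrite /in_Ab -/b aa_b (absv_id HA _ (mulv_ge0 HA b_ge0 b_ge0)).
split=> -[mu [mu_gt0 le_mu]].
  exists (mu * mu); split; first exact: mulr_gt0.
  exact: (sqrv_bounded_sqr HA b_ge0 (ltW mu_gt0) le_mu).
exists (mu + 1); split; first by rewrite addr_gt0.
by apply: (bounded_of_sqrv_bounded HA Hsp b_ge0 _ _ le_mu); [rewrite addr_gt0 | nra].
Qed.
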